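(* Let $b\ge2$, $n\ge1$ be integers and $\mathcal D=\{d,\dots,d+b-1\}$ a set of consecutive integers containing $0$. The state space of the $n$-carry process over $(-b,\mathcal D)$ is $\Omega_n(-b,\mathcal D)=\{s,s+1,\dots,t\}$ with $$s=-\lceil (n-1)(-l)\rceil=\lfloor (n-1)l\rfloor,\qquad t=\lceil (n-1)(l+1)\rceil,\qquad l=\frac{-d-b}{b+1}.$$ Consequently $\#\Omega_n(-b,\mathcal D)=n+1$ if $(n-1)l\notin\mathbb Z$ and $=n$ if $(n-1)l\in\mathbb Z$.
   Context: Carries process over the negative base $(-b,\mathcal D)$: let $\{X_{k,i}\}_{1\le k\le n,\ i\ge0}$ be independent random variables, each uniformly distributed on $\mathcal D$. Set $C_0=0$; for $i\ge0$ let $A_i$ be the unique element of $\mathcal D$ with $A_i\equiv C_i+X_{1,i}+\dots+X_{n,i}\pmod b$, and set $C_{i+1}=(C_i+X_{1,i}+\dots+X_{n,i}-A_i)/(-b)$. The state space $\Omega_n(-b,\mathcal D)$ is the set of integers $c$ with $\Pr(C_i=c)>0$ for some $i\ge0$. *)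

From HB Require Import structures.
From mathcomp Require Import all_boot all_order all_algebra.
Set Implicit Arguments. Unset Strict Implicit. Unset Printing Implicit Defensive.
Import Order.TTheory GRing.Theory Num.Theory.
Local Open Scope ring_scope.

(* Digit set D = {d, ..., d+b-1}; a digit is encoded as d + k with k : 'I_b. *)
Definition digit (b : nat) (d : int) (k : 'I_b) : int := d + (k : nat)%:Z.

(* A = the unique element of D congruent to x mod b. *)
Definition Adigit (b : nat) (d : int) (x : int) : int :=
  d + ((x - d) %% (b%:Z))%Z.

(* One step of the carries process: given C_i and the column sum
   X_{1,i}+...+X_{n,i}, return C_{i+1} = (C_i + sum - A_i)/(-b). *)
Definition carry_step (b : nat) (d : int) (c sum : int) : int :=
  ((c + sum - Adigit b d (c + sum)) %/ (- (b%:Z)))%Z.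

(* C_i as a function of the realised digits X_{j,k} (0 <= k < i, 0 <= j < n),
   with C_0 = 0. *)
Definition carry_at (b n : nat) (d : int) (i : nat)
    (X : {ffun 'I_i * 'I_n -> 'I_b}) : int :=
  foldl (carry_step b d) 0
    [seq \sum_(j < n) @digit b d (X (k, j)) | k <- enum 'I_i].

(* Pr(C_i = c) for independent uniform digits: the uniform probability on the
   b^(i*n) equally likely digit arrays. *)
Definition carry_prob (b n : nat) (d : int) (i : nat) (c : int) : rat :=
  (#|[set X : {ffun 'I_i * 'I_n -> 'I_b} | @carry_at b n d i X == c]|)%:R
  / (#|{ffun 'I_i * 'I_n -> 'I_b}|)%:R.

Definition in_state_space (b n : nat) (d : int) (c : int) : Prop :=
  exists i : nat, 0 < carry_prob b n d i c.

From HB Require Import structures.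
From mathcomp Require Import all_boot all_order all_algebra.
From mathcomp Require Import zify ring.
From Stdlib Require Import Classical.
Set Implicit Arguments. Unset Strict Implicit. Unset Printing Implicit Defensive.
Import Order.TTheory GRing.Theory Num.Theory.
Local Open Scope ring_scope.

(* 1. A carry step is C' = -floor((C + S - d)/b), where S is the column sum.
   2. The state space is exactly the set of values reachable from 0 by
      finitely many steps whose column sums S lie in [n d, n (d+b-1)]: every
      such S is the digit sum of a column (fill digits greedily).
   3. With s, t characterised by integer inequalities, [s, t] contains 0 and
      is stable under admissible steps, so all reachable values lie in it.
   4. Conversely take the maximal run [a, c] of consecutive reachable values
      around 0.  Anything whose window of b preimages meets the range of
      C + S - d over [a, c] is reachable; as a-1 and c+1 are not, a <= s and
      t <= c.
   5. Finally t = s + (n-1) + [(n-1) l is not an integer], which gives the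
      cardinality. *)

Lemma carry_step_div (b : nat) (d c S : int) : (0 < b)%N ->
  carry_step b d c S = - ((c + S - d) %/ b%:Z)%Z.
Proof.
move=> hb; rewrite /carry_step /Adigit.
set x := c + S - d.
have -> : c + S - (d + (x %% b%:Z)%Z) = (x %/ b%:Z)%Z * b%:Z.
  by have := divz_eq x b%:Z; rewrite /x; lia.
rewrite divzN mulzK //; lia.
Qed.

Lemma carry_stepP (b : nat) (d c S z : int) : (0 < b)%N ->
  carry_step b d c S = z <-> - z * b%:Z <= c + S - d < (- z + 1) * b%:Z.
Proof.
move=> hb; have hb' : 0 < b%:Z by lia.
rewrite carry_step_div // -(lez_divRL _ _ hb') -(ltz_divLR _ _ hb').
split; [move=> <-; lia | lia].
Qed.

(* Column sums of n digits from D range exactly over [n d, n (d+b-1)]. *)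
Definition admissible_sum (b n : nat) (d S : int) : bool :=
  (n%:Z * d <= S) && (S <= n%:Z * (d + b%:Z - 1)).

Definition reachable (b n : nat) (d c : int) : Prop :=
  exists sums : seq int,
    all (admissible_sum b n d) sums /\ foldl (carry_step b d) 0 sums = c.

Lemma digit_column_sum (b n : nat) (d : int) (f : 'I_n -> 'I_b) :
  \sum_(j < n) digit d (f j) = n%:Z * d + (\sum_(j < n) (f j : nat))%:Z.
Proof.
rewrite /digit big_split /= sumr_const card_ord -mulr_natl natz.
by congr (_ + _); rewrite -[RHS]natz natr_sum; apply: eq_bigr => j _; rewrite natz.
Qed.

Lemma column_sum_admissible (b n : nat) (d : int) (f : 'I_n -> 'I_b) :
  (0 < b)%N -> admissible_sum b n d (\sum_(j < n) digit d (f j)).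
Proof.
move=> hb; have hsum : (\sum_(j < n) (f j : nat) <= n * b.-1)%N.
  apply: leq_trans (_ : \sum_(j < n) b.-1 <= _)%N; last by rewrite sum_nat_const card_ord.
  by apply: leq_sum => j _; have := ltn_ord (f j); lia.
rewrite /admissible_sum digit_column_sum; apply/andP; split; first lia.
have : (n * b.-1 = n * b - n)%N by rewrite -subn1 mulnBr muln1.
nia.
Qed.

(* Greedy column with digit-offset sum e: the first digits take offset b-1
   until e is exhausted. *)
Definition greedy_digit (b e j : nat) : nat := minn b.-1 (e - j * b.-1).

Lemma greedy_digit_lt (b e j : nat) : (0 < b)%N -> (greedy_digit b e j < b)%N.
Proof. rewrite /greedy_digit; lia. Qed.

Lemma sum_greedy_digit (b e n : nat) :
  (\sum_(j < n) greedy_digit b e j = minn e (n * b.-1))%N.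
Proof.
elim: n => [|n IH]; first by rewrite big_ord0; lia.
rewrite big_ord_recr /= IH /greedy_digit; lia.
Qed.

Definition greedy_column (b n : nat) (hb : (0 < b)%N) (d S : int) : 'I_n -> 'I_b :=
  fun j => Ordinal (greedy_digit_lt (absz (S - n%:Z * d)%R) j hb).

Lemma greedy_column_sum (b n : nat) (hb : (0 < b)%N) (d S : int) :
  admissible_sum b n d S -> \sum_(j < n) digit d (greedy_column hb d S j) = S.
Proof.
rewrite digit_column_sum sum_greedy_digit.
have : (n * b.-1 = n * b - n)%N by rewrite -subn1 mulnBr muln1.
rewrite /admissible_sum; nia.
Qed.

Lemma admissible_realised (b n : nat) (d : int) (sums : seq int) : (0 < b)%N ->
  all (admissible_sum b n d) sums ->
  exists X : {ffun 'I_(size sums) * 'I_n -> 'I_b},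
    [seq \sum_(j < n) digit d (X (k, j)) | k <- enum 'I_(size sums)] = sums.
Proof.
move=> hb /allP hsums.
exists [ffun p : 'I_(size sums) * 'I_n => greedy_column hb d (nth 0 sums p.1) p.2].
rewrite -[RHS](mkseq_nth 0) /mkseq -val_enum_ord -map_comp.
apply: eq_map => k /=; under eq_bigr => j _ do rewrite ffunE /=.
by apply: greedy_column_sum; apply: hsums; apply: mem_nth.
Qed.

Lemma carry_prob_gt0 (b n : nat) (d : int) (i : nat) (c : int) : (0 < b)%N ->
  0 < carry_prob b n d i c <-> exists X, @carry_at b n d i X = c.
Proof.
move=> hb; rewrite /carry_prob pmulr_lgt0 ?invr_gt0 ?ltr0n; last first.
  by rewrite card_ffun card_ord expn_gt0 hb.
rewrite card_gt0; split; first by case/set0Pn=> X; rewrite inE => /eqP; exists X.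
by case=> X hX; apply/set0Pn; exists X; rewrite inE hX.
Qed.

Lemma state_space_reachable (b n : nat) (d c : int) : (0 < b)%N ->
  in_state_space b n d c <-> reachable b n d c.
Proof.
move=> hb; split.
- case=> i /(carry_prob_gt0 _ _ _ _ hb) [X <-].
  exists [seq \sum_(j < n) digit d (X (k, j)) | k <- enum 'I_i]; split=> //.
  by apply/allP => S /mapP [k _ ->]; apply: column_sum_admissible.
- case=> sums [hsums <-]; exists (size sums); apply/carry_prob_gt0 => //.
  by have [X hX] := admissible_realised hb hsums; exists X; rewrite /carry_at hX.
Qed.

Lemma reachable0 (b n : nat) (d : int) : reachable b n d 0.
Proof. by exists [::]. Qed.

Lemma reachable_step (b n : nat) (d c S : int) :
  reachable b n d c -> admissible_sum b n d S -> reachable b n d (carry_step b d c S).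
Proof.
case=> sums [hsums <-] hS; exists (rcons sums S); split.
  by rewrite all_rcons hS hsums.
by rewrite -cats1 foldl_cat.
Qed.

(* If all of [a, c] is reachable, so is every z whose window
   [-z b, -z b + b - 1] meets the range [a + n d - d, c + n (d+b-1) - d]
   of C + S - d over C in [a, c] and admissible S. *)
Lemma reachable_window (b n : nat) (d a c z : int) : (0 < b)%N -> a <= c ->
  (forall x, a <= x <= c -> reachable b n d x) ->
  - z * b%:Z <= c + n%:Z * (d + b%:Z - 1) - d ->
  a + n%:Z * d - d <= - z * b%:Z + b%:Z - 1 ->
  reachable b n d z.
Proof.
move=> hb hac hR hlo hhi.
have hspread : 0 <= n%:Z * (b%:Z - 1) by apply: mulr_ge0; lia.
pose y := Num.max (- z * b%:Z) (a + n%:Z * d - d).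
pose x := Num.max a (y + d - n%:Z * (d + b%:Z - 1)).
have -> : z = carry_step b d x (y - x + d).
  by apply/esym/carry_stepP => //; rewrite /x /y; lia.
apply: reachable_step; first by apply: hR; rewrite /x /y; lia.
by rewrite /admissible_sum /x /y; apply/andP; split; lia.
Qed.

Lemma maximal_run (Q : nat -> Prop) (N : nat) : Q 0%N -> ~ Q N ->
  exists j, (forall k, (k <= j)%N -> Q k) /\ ~ Q j.+1.
Proof.
move=> hQ0 hQN; apply: NNPP => hno; apply: hQN.
suff run : forall M k, (k <= M)%N -> Q k by exact: (run N N).
elim=> [|M IH] k; first by rewrite leqn0 => /eqP ->.
rewrite leq_eqVlt ltnS => /orP [/eqP -> | /IH //].
by apply: NNPP => hM; apply: hno; exists M.
Qed.

(* s and t are given by the integer inequalities defining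
   floor((n-1)(-d-b)/(b+1)) and ceil((n-1)(1-d)/(b+1)). *)
Section StateInterval.

Variables (b n : nat) (d s t : int).
Hypotheses (hb : (2 <= b)%N) (hn : (1 <= n)%N).
Hypotheses (hd0 : d <= 0) (hd1 : 0 <= d + (b%:Z - 1)).
Hypothesis hs : (b%:Z + 1) * s <= (n%:Z - 1) * (- d - b%:Z) < (b%:Z + 1) * (s + 1).
Hypothesis ht : (b%:Z + 1) * (t - 1) < (n%:Z - 1) * (1 - d) <= (b%:Z + 1) * t.

Lemma step_preserves_interval (c S : int) : s <= c <= t ->
  admissible_sum b n d S -> s <= carry_step b d c S <= t.
Proof.
move=> hc hS; have /(carry_stepP _ _ _ _ (ltnW hb)) := erefl (carry_step b d c S).
move: hS; rewrite /admissible_sum.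
set z := carry_step b d c S; nia.
Qed.

Lemma reachable_in_interval (c : int) : reachable b n d c -> s <= c <= t.
Proof.
case=> sums [hsums <-].
have : s <= 0 <= t by nia.
elim: sums 0 hsums => [|S sums IH] c0 //= /andP [hS hsums] hc0.
by apply: IH => //; apply: step_preserves_interval.
Qed.

Lemma run_covers_interval (a c : int) : a <= 0 -> 0 <= c ->
  c + n%:Z * (d + b%:Z - 1) - d < - (a - 1) * b%:Z ->
  - (c + 1) * b%:Z + b%:Z - 1 < a + n%:Z * d - d ->
  a <= s /\ t <= c.
Proof.
move=> ha hc hup hlo.
have hb1 : 0 < b%:Z - 1 by lia.
have hlo' : 0 <= (a + c * b%:Z + (n%:Z - 1) * d) * b%:Z by apply: mulr_ge0; lia.
have hup' : 0 <= ((n%:Z - 1) * (- d) - c - (n%:Z - 1) * (b%:Z - 1) - b%:Z * a) * b%:Z.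
  by apply: mulr_ge0; lia.
have hct : (n%:Z - 1) * (1 - d) <= (b%:Z + 1) * c.
  by rewrite -(ler_pM2l hb1); lia.
have has : (b%:Z + 1) * a <= (n%:Z - 1) * (- d - b%:Z).
  by rewrite -(ler_pM2l hb1); lia.
split.
- have : (b%:Z + 1) * a < (b%:Z + 1) * (s + 1) by lia.
  by rewrite ltr_pM2l; lia.
- have : (b%:Z + 1) * (t - 1) < (b%:Z + 1) * c by lia.
  by rewrite ltr_pM2l; lia.
Qed.

Lemma reachable_run : exists a c, [/\ a <= 0, 0 <= c,
  (forall x, a <= x <= c -> reachable b n d x),
  ~ reachable b n d (a - 1) & ~ reachable b n d (c + 1)].
Proof.
have [j [hdown hj]] := @maximal_run (fun k => reachable b n d (- k%:Z))
  (absz s).+1 (reachable0 b n d) (fun h => ltac:(move: (reachable_in_interval h); lia)).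
have [k [hup hk]] := @maximal_run (fun k => reachable b n d k%:Z)
  (absz t).+1 (reachable0 b n d) (fun h => ltac:(move: (reachable_in_interval h); lia)).
exists (- j%:Z), k%:Z; split=> [||x hx||]; try lia.
- case: (lerP x 0) => hx0.
  + have -> : x = - (absz x)%:Z by lia.
    by apply: hdown; lia.
  + have -> : x = (absz x)%:Z by lia.
    by apply: hup; lia.
- by have -> : - j%:Z - 1 = - (j.+1)%:Z by lia.
- by have -> : k%:Z + 1 = (k.+1)%:Z by lia.
Qed.

Lemma interval_reachable (c : int) : s <= c <= t -> reachable b n d c.
Proof.
move=> hc; have [a [c' [ha hc' hrun hlo hhi]]] := reachable_run.
have hb0 : (0 < b)%N by apply: ltnW.
have [] := @run_covers_interval a c' ha hc'.
- rewrite ltNge; apply/negP => hz; apply: hlo.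
  by apply: (reachable_window hb0 _ hrun) => //; nia.
- rewrite ltNge; apply/negP => hz; apply: hhi.
  by apply: (reachable_window hb0 _ hrun) => //; nia.
- by move=> has htc; apply: hrun; lia.
Qed.

Lemma reachable_iff_interval (c : int) : reachable b n d c <-> s <= c <= t.
Proof. by split; [apply: reachable_in_interval | apply: interval_reachable]. Qed.

End StateInterval.

Lemma floor_ratio (R : archiRealFieldType) (p q : int) : 0 < q ->
  q * Num.floor (p%:~R / q%:~R : R) <= p < q * (Num.floor (p%:~R / q%:~R : R) + 1).
Proof.
move=> hq; have hq' : (0 : R) < q%:~R by rewrite ltr0z.
case/andP: (floor_itv (p%:~R / q%:~R : R)).
rewrite ler_pdivlMr // ltr_pdivrMr // -!intrM ler_int ltr_int.
by rewrite ![_ * q]mulrC => -> ->.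
Qed.

Lemma ceil_ratio (R : archiRealFieldType) (p q : int) : 0 < q ->
  q * (Num.ceil (p%:~R / q%:~R : R) - 1) < p <= q * Num.ceil (p%:~R / q%:~R : R).
Proof.
move=> hq; have hq' : (0 : R) < q%:~R by rewrite ltr0z.
case/andP: (ceil_itv (p%:~R / q%:~R : R)).
rewrite ltr_pdivlMr // ler_pdivrMr // -!intrM ler_int ltr_int.
by rewrite ![_ * q]mulrC => -> ->.
Qed.

Definition int_range (s t : int) : seq int := [seq s + k%:Z | k <- iota 0 `|t - s + 1|].

Lemma int_range_uniq (s t : int) : uniq (int_range s t).
Proof. by rewrite map_inj_uniq ?iota_uniq // => x y /addrI []. Qed.

Lemma mem_int_range (s t c : int) : s <= t + 1 ->
  (c \in int_range s t) = (s <= c <= t).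
Proof.
move=> hst; apply/mapP/idP => [[k] | hc]; first by rewrite mem_iota; lia.
by exists `|c - s|%N; rewrite ?mem_iota; lia.
Qed.

Lemma size_int_range (s t : int) : size (int_range s t) = absz (t - s + 1).
Proof. by rewrite size_map size_iota. Qed.

Theorem lemma6 (b n : nat) (d : int) (hb : (2 <= b)%N) (hn : (1 <= n)%N)
    (hd0 : d <= 0) (hd1 : 0 <= d + (b%:Z - 1)) :
  let l : rat := (- d - b%:Z)%:~R / (b%:Z + 1)%:~R in
  let s : int := Num.floor ((n%:Z - 1)%:~R * l) in
  let t : int := Num.ceil ((n%:Z - 1)%:~R * (l + 1)) in
  s = - Num.ceil ((n%:Z - 1)%:~R * (- l)) /\
  (forall c : int, in_state_space b n d c <-> s <= c <= t) /\
  exists sq : seq int,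
    uniq sq /\ (forall c : int, c \in sq <-> in_state_space b n d c) /\
    size sq = (if (n%:Z - 1)%:~R * l \is a Num.int then n else n.+1).
Proof.
move=> l s t.
have hB : 0 < b%:Z + 1 by lia.
have hB0 : (b%:Z + 1)%:~R != 0 :> rat by rewrite intr_eq0 gt_eqF.
have l1 : l + 1 = (1 - d)%:~R / (b%:Z + 1)%:~R.
  apply: (mulIf hB0); rewrite mulrDl !divfK // mul1r -intrD; congr _%:~R; ring.
have hs : (b%:Z + 1) * s <= (n%:Z - 1) * (- d - b%:Z) < (b%:Z + 1) * (s + 1).
  by have := floor_ratio rat ((n%:Z - 1) * (- d - b%:Z)) hB; rewrite intrM -mulrA.
have ht : (b%:Z + 1) * (t - 1) < (n%:Z - 1) * (1 - d) <= (b%:Z + 1) * t.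
  by have := ceil_ratio rat ((n%:Z - 1) * (1 - d)) hB; rewrite intrM -mulrA -l1.
have space c : in_state_space b n d c <-> s <= c <= t.
  by rewrite state_space_reachable ?(ltnW hb) // (reachable_iff_interval hb hn hd0 hd1 hs ht).
have ts : t = s + (n%:Z - 1) + ((n%:Z - 1)%:~R * l \isn't a Num.int).
  by rewrite /t mulrDr mulr1 ceilDrz ?intr_int // intrKceil ceil_floor -/s addrAC.
split; first by rewrite ceilNfloor mulrN !opprK.
split=> //; exists (int_range s t); split; first exact: int_range_uniq.
have hst : s <= t + 1 by rewrite ts; case: (_ \isn't a Num.int); lia.
split; first by move=> c; rewrite mem_int_range // space.
by rewrite size_int_range ts; case: (_ \is a Num.int) => /=; lia.
Qed.
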